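(* Let $1\le p<\infty$ and let $n\ge m\ge 0$ be integers with $n-m\equiv 0\pmod 2$. Then $$\left[\sum_{i=0}^{\frac{n-m-2}{2}}2\binom{n}{i}^p+\sum_{i=0}^{m}\left[\binom{m}{i}+\binom{n}{\frac{n-m}{2}+i}\right]^p\right]^{1/p} \le \Big[\sum_{i=0}^{n}\binom{n}{i}^p\Big]^{1/p}+\Big[\sum_{i=0}^{m}\binom{m}{i}^p\Big]^{1/p},$$ where the first sum on the left is empty (zero) when $n=m$.
   Context: Binomial coefficients have their usual meaning. *)

From HB Require Import structures.
From mathcomp Require Import all_boot all_order all_algebra.
From mathcomp Require Import all_classical all_reals.
From mathcomp Require Import exp.
Set Implicit Arguments. Unset Strict Implicit. Unset Printing Implicit Defensive.

From HB Require Import structures.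
From mathcomp Require Import all_boot all_order all_algebra.
From mathcomp Require Import all_classical all_reals.
From mathcomp Require Import exp all_analysis.
From mathcomp Require Import zify.
Import Order.TTheory GRing.Theory Num.Theory.
Local Open Scope ring_scope.

(* The inequality is Minkowski's inequality in l^p for two finitely supported
   sequences indexed by 0..n.  With k = (n-m)/2, so that n = k + m + k, take
   f j = C(n,j) (the n-th row of Pascal's triangle) and g = the m-th row
   shifted right by k, i.e. g (k+i) = C(m,i) and g = 0 outside [k, k+m].
   Then ||f||_p and ||g||_p are the two terms on the right, while ||f+g||_p
   is the left-hand side: on the middle block [k, k+m] the sum is
   C(m,i) + C(n,k+i), and on the two outer blocks of length k only f
   survives, where the symmetry C(n, n-i) = C(n,i) pairs the terms of the
   left and right blocks into 2 C(n,i)^p.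
   The file first derives a finite Minkowski inequality from the library's
   Minkowski inequality for the counting measure on nat, then proves a
   reindexing lemma splitting a sum over 0..k+m+k into middle and mirrored
   outer blocks, computes the three norms, and concludes. *)

Lemma Lnorm_counting_finite (R : realType) (p : R) (N : nat) (f : nat -> R) :
  0 < p -> (forall k, (N <= k)%N -> f k = 0) ->
  ('N[@counting nat R]_p%:E [EFin \o f] =
     ((\sum_(k < N) `|f k| `^ p) `^ p^-1)%:E)%E.
Proof.
move=> p_gt0 f_supp; rewrite Lnorm_counting//.
rewrite (nneseries_split 0 N); last by move=> k _; apply: poweR_ge0.
rewrite add0n eseries0 ?adde0; last first.
  by move=> i Ni _ /=; rewrite f_supp// normr0 powR0 ?gt_eqF.
by rewrite big_mkord sumEFin poweR_EFin.
Qed.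

Lemma minkowski_finite (R : realType) (p : R) (N : nat) (f g : nat -> R) :
  1 <= p ->
  (\sum_(k < N) `|f k + g k| `^ p) `^ p^-1 <=
  (\sum_(k < N) `|f k| `^ p) `^ p^-1 + (\sum_(k < N) `|g k| `^ p) `^ p^-1.
Proof.
move=> p_ge1; have p_gt0 : 0 < p by apply: lt_le_trans p_ge1.
pose trunc (h : nat -> R) k := if (k < N)%N then h k else 0.
have trunc_supp h k : (N <= k)%N -> trunc h k = 0.
  by rewrite /trunc ltnNge => ->.
have sum_trunc (h : nat -> R) :
    \sum_(k < N) `|trunc h k| `^ p = \sum_(k < N) `|h k| `^ p.
  by apply: eq_bigr => k _; rewrite /trunc ltn_ord.
have := @minkowski_EFin _ nat R (@counting nat R) (trunc f) (trunc g) p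
  (fun _ _ _ => I) (fun _ _ _ => I) p_ge1.
have fg_supp k : (N <= k)%N -> (trunc f \+ trunc g)%R k = 0.
  by move=> kN /=; rewrite !trunc_supp // addr0.
rewrite (Lnorm_counting_finite _ _ _ _ p_gt0 (trunc_supp f)).
rewrite (Lnorm_counting_finite _ _ _ _ p_gt0 (trunc_supp g)).
rewrite (Lnorm_counting_finite _ _ _ _ p_gt0 fg_supp) -EFinD lee_fin !sum_trunc.
have -> : \sum_(k < N) `|(trunc f \+ trunc g)%R k| `^ p =
          \sum_(k < N) `|trunc (fun k => f k + g k) k| `^ p.
  by apply: eq_bigr => k _; rewrite /trunc /= ltn_ord.
by rewrite sum_trunc.
Qed.

Lemma sum_mirror_split (R : realType) (F : nat -> R) (N k m : nat) :
  N = (k + m + k)%N ->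
  \sum_(j < N.+1) F j =
  \sum_(i < k) (F i + F (N - i)%N) + \sum_(i < m.+1) F (k + i)%N.
Proof.
move=> defN; have -> : N.+1 = (k + (m.+1 + k))%N by lia.
rewrite big_split_ord big_split_ord /= addrA addrAC big_split /=.
congr (_ + _ + _).
rewrite (reindex_inj rev_ord_inj) /=; apply: eq_bigr => i _.
by congr F; have := ltn_ord i; lia.
Qed.

Definition shifted_row (k m j : nat) : nat :=
  if (k <= j)%N then 'C(m, j - k) else 0.

Lemma shifted_row_mid (k m i : nat) : shifted_row k m (k + i) = 'C(m, i).
Proof. by rewrite /shifted_row leq_addr addKn. Qed.

Lemma shifted_row_out (k m j : nat) :
  (j < k)%N || (k + m < j)%N -> shifted_row k m j = 0%N.
Proof.
rewrite /shifted_row; case: leqP => //= kj mj.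
by rewrite bin_small // ltn_subRL.
Qed.

Section Norms.
Variables (R : realType) (p : R) (n k m : nat).
Hypothesis p_gt0 : 0 < p.
Hypothesis defn : n = (k + m + k)%N.

Let g (j : nat) : R := (shifted_row k m j)%:R.

Let g_left (i : 'I_k) : g i = 0.
Proof. by rewrite /g shifted_row_out ?ltn_ord. Qed.

Let g_right (i : 'I_k) : g (n - i)%N = 0.
Proof. by rewrite /g shifted_row_out //; have := ltn_ord i; lia. Qed.

Lemma shifted_row_norm :
  \sum_(j < n.+1) `|g j| `^ p = \sum_(i < m.+1) 'C(m, i)%:R `^ p.
Proof.
rewrite (sum_mirror_split _ (fun j => `|g j| `^ p) _ _ _ defn) big1 ?add0r.
  by apply: eq_bigr => i _; rewrite /g shifted_row_mid ger0_norm.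
by move=> i _; rewrite g_left g_right normr0 powR0 ?addr0 ?gt_eqF.
Qed.

Lemma sum_rows_norm :
  \sum_(j < n.+1) `|'C(n, j)%:R + g j| `^ p =
  \sum_(i < k) 2 * ('C(n, i)%:R `^ p)
    + \sum_(i < m.+1) ('C(m, i)%:R + 'C(n, k + i)%:R) `^ p.
Proof.
rewrite (sum_mirror_split _ (fun j => `|'C(n, j)%:R + g j| `^ p) _ _ _ defn).
congr (_ + _).
  apply: eq_bigr => i _; rewrite g_left g_right !addr0 !ger0_norm //.
  rewrite bin_sub; last by have := ltn_ord i; lia.
  by rewrite mulr_natl mulr2n.
by apply: eq_bigr => i _; rewrite /g shifted_row_mid ger0_norm // addrC.
Qed.

End Norms.

Theorem mainTheorem19 (R : realType) (p : R) (n m : nat) :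
  1 <= p -> (m <= n)%N -> ~~ odd (n - m) ->
  (\sum_(i < (n - m)./2) 2 * ('C(n, i)%:R `^ p)
     + \sum_(i < m.+1) ('C(m, i)%:R + 'C(n, (n - m)./2 + i)%:R) `^ p) `^ p^-1
  <= (\sum_(i < n.+1) 'C(n, i)%:R `^ p) `^ p^-1
     + (\sum_(i < m.+1) 'C(m, i)%:R `^ p) `^ p^-1.
Proof.
move=> p_ge1 le_mn even_nm; have p_gt0 : 0 < p by apply: lt_le_trans p_ge1.
set k := (n - m)./2.
have defn : n = (k + m + k)%N.
  have := odd_double_half (n - m); rewrite (negbTE even_nm) add0n -addnn -/k.
  lia.
have := @minkowski_finite R p n.+1 (fun j => 'C(n, j)%:R)
  (fun j => (shifted_row k m j)%:R) p_ge1.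
rewrite (sum_rows_norm _ _ _ _ _ p_gt0 defn).
rewrite (shifted_row_norm _ _ _ _ _ p_gt0 defn).
rewrite (eq_bigr (fun j : 'I_n.+1 => 'C(n, j)%:R `^ p)) //.
by move=> j _; rewrite ger0_norm.
Qed.
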